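(* Let $d\ge 2$ and $0<\delta<\frac{\pi}{2}$. Every convex body $D\subset S^d$ of constant diameter $\delta$ is strictly convex, i.e., $\mathrm{bd}(D)$ contains no arc.
   Context: $S^d$ is the unit sphere in $E^{d+1}$; for non-antipodal points $a,b$, the arc $ab$ is the shorter great-circle arc joining them and $|ab|$ is its length. A set $C\subset S^d$ containing no pair of antipodes is convex if it contains the arc joining any two of its points; a closed convex set with non-empty interior is a convex body. A convex body $D$ of diameter $\delta$ (the maximum spherical distance between two of its points) is of constant diameter $\delta$ if for every $p\in\mathrm{bd}(D)$ there exists $p'\in\mathrm{bd}(D)$ with $|pp'|=\delta$. *)

From Stdlib Require Import Reals.
Open Scope R_scope.

(* Vectors of E^{n}: functions nat -> R; only coordinates 0..n-1 matter,
   points of the sphere are required to vanish beyond n. *)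
Definition vec := nat -> R.

Fixpoint dot (n : nat) (x y : vec) : R :=
  match n with
  | O => 0
  | S k => dot k x y + x k * y k
  end.

Definition vopp (x : vec) : vec := fun i => - x i.

Definition on_sphere (d : nat) (x : vec) : Prop :=
  dot (S d) x x = 1 /\ forall i, (S d <= i)%nat -> x i = 0.

Definition sdist (d : nat) (x y : vec) : R := acos (dot (S d) x y).

Definition antipodal (x y : vec) : Prop := y = vopp x.

(* the shorter great-circle arc ab (for non-antipodal a, b):
   points of the sphere that are non-negative combinations of a and b *)
Definition arc (d : nat) (a b : vec) (p : vec) : Prop :=
  on_sphere d p /\
  exists s t : R, 0 <= s /\ 0 <= t /\ p = (fun i => s * a i + t * b i).

Definition subset_sphere (d : nat) (C : vec -> Prop) : Prop :=
  forall x, C x -> on_sphere d x.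

Definition spherically_convex (d : nat) (C : vec -> Prop) : Prop :=
  subset_sphere d C /\
  (forall x, C x -> ~ C (vopp x)) /\
  (forall a b p, C a -> C b -> arc d a b p -> C p).

Definition sinterior (d : nat) (C : vec -> Prop) (p : vec) : Prop :=
  on_sphere d p /\
  exists eps, 0 < eps /\ forall q, on_sphere d q -> sdist d p q < eps -> C q.

Definition sclosure (d : nat) (C : vec -> Prop) (p : vec) : Prop :=
  on_sphere d p /\
  forall eps, 0 < eps -> exists q, C q /\ sdist d p q < eps.

Definition sboundary (d : nat) (C : vec -> Prop) (p : vec) : Prop :=
  sclosure d C p /\ ~ sinterior d C p.

Definition sclosed (d : nat) (C : vec -> Prop) : Prop :=
  forall p, sclosure d C p -> C p.

Definition convex_body (d : nat) (D : vec -> Prop) : Prop :=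
  spherically_convex d D /\ sclosed d D /\ exists p, sinterior d D p.

Definition has_diameter (d : nat) (D : vec -> Prop) (delta : R) : Prop :=
  (exists a b, D a /\ D b /\ sdist d a b = delta) /\
  (forall a b, D a -> D b -> sdist d a b <= delta).

Definition constant_diameter (d : nat) (D : vec -> Prop) (delta : R) : Prop :=
  convex_body d D /\ has_diameter d D delta /\
  forall p, sboundary d D p ->
    exists p', sboundary d D p' /\ sdist d p p' = delta.

From Stdlib Require Import Reals.
From Stdlib Require Import Lra Lia Psatz Classical FunctionalExtensionality.
Open Scope R_scope.

(* Suppose the boundary of D contains the arc ab (a <> b, not
   antipodal) and let m be the midpoint of that arc, m = s (a + b) with
   s = 1 / |a + b|.  Since |a + b| < 2 we have s > 1/2.  As m lies on the
   boundary, constant diameter gives a point m' of D with |m m'| = delta, i.e.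
   <m, m'> = cos delta.  Since a, b, m' all lie in D of diameter delta,
   <a, m'> >= cos delta and <b, m'> >= cos delta, and cos delta > 0 because
   delta < pi/2.  Hence <m, m'> = s (<a, m'> + <b, m'>) >= 2 s cos delta,
   which is strictly larger than cos delta: a contradiction. *)

Definition lincomb (s t : R) (a b : vec) : vec := fun i => s * a i + t * b i.

Lemma dot_sym n x y : dot n x y = dot n y x.
Proof. induction n; simpl; [ring | rewrite IHn; ring]. Qed.

Lemma dot_lincomb_l n s t a b z :
  dot n (lincomb s t a b) z = s * dot n a z + t * dot n b z.
Proof. induction n; unfold lincomb in *; simpl; [ring | rewrite IHn; ring]. Qed.

Lemma dot_lincomb_r n s t a b z :
  dot n z (lincomb s t a b) = s * dot n z a + t * dot n z b.
Proof. rewrite dot_sym, dot_lincomb_l, !(dot_sym n z). reflexivity. Qed.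

Lemma dot_self_nonneg n x : 0 <= dot n x x.
Proof. induction n; simpl; nra. Qed.

Lemma dot_self_ge_coord n x i : (i < n)%nat -> x i * x i <= dot n x x.
Proof.
  induction n as [|n IH]; intros Hi; [lia |]. simpl.
  destruct (Nat.eq_dec i n) as [-> | Hne].
  - pose proof (dot_self_nonneg n x); lra.
  - assert (x i * x i <= dot n x x) by (apply IH; lia). nra.
Qed.

Lemma dot_self_pos n u :
  (forall i, (n <= i)%nat -> u i = 0) -> u <> (fun _ => 0) -> 0 < dot n u u.
Proof.
  intros Hsupp Hnz.
  destruct (classic (exists i, u i <> 0)) as [[i Hi] | Hall].
  - assert (Hin : (i < n)%nat).
    { destruct (Nat.lt_ge_cases i n) as [h | h]; [exact h |].
      exfalso; apply Hi, Hsupp, h. }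
    pose proof (dot_self_ge_coord n u i Hin).
    assert (0 < u i * u i) by (destruct (Rlt_or_le (u i) 0); nra).
    lra.
  - exfalso; apply Hnz, functional_extensionality; intro i.
    apply NNPP; intro h; apply Hall; eauto.
Qed.

Section UnitVectors.

Variable d : nat.
Variables a b : vec.
Hypothesis Ha : on_sphere d a.
Hypothesis Hb : on_sphere d b.

Lemma lincomb_norm s t :
  dot (S d) (lincomb s t a b) (lincomb s t a b)
  = s * s + t * t + 2 * s * t * dot (S d) a b.
Proof.
  destruct Ha as [Haa _], Hb as [Hbb _].
  rewrite dot_lincomb_l, !dot_lincomb_r, (dot_sym _ b a), Haa, Hbb. ring.
Qed.

Lemma lincomb_support s t i : (S d <= i)%nat -> lincomb s t a b i = 0.
Proof.
  destruct Ha as [_ Ha0], Hb as [_ Hb0]; intro Hi.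
  unfold lincomb; rewrite (Ha0 i Hi), (Hb0 i Hi); ring.
Qed.

(* Distinct unit vectors have inner product < 1 (apply positivity to a - b). *)
Lemma dot_lt_1 : a <> b -> dot (S d) a b < 1.
Proof.
  intro Hab.
  assert (Hpos : 0 < dot (S d) (lincomb 1 (-1) a b) (lincomb 1 (-1) a b)).
  { apply dot_self_pos; [apply lincomb_support |].
    intro Hz; apply Hab, functional_extensionality; intro i.
    pose proof (equal_f Hz i) as Hi; unfold lincomb in Hi; lra. }
  rewrite lincomb_norm in Hpos; lra.
Qed.

(* Non-antipodal unit vectors have inner product > -1 (positivity of a + b). *)
Lemma dot_gt_m1 : ~ antipodal a b -> -1 < dot (S d) a b.
Proof.
  intro Hna.
  assert (Hpos : 0 < dot (S d) (lincomb 1 1 a b) (lincomb 1 1 a b)).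
  { apply dot_self_pos; [apply lincomb_support |].
    intro Hz; apply Hna; unfold antipodal, vopp.
    apply functional_extensionality; intro i.
    pose proof (equal_f Hz i) as Hi; unfold lincomb in Hi; lra. }
  rewrite lincomb_norm in Hpos; lra.
Qed.

Lemma arc_left : arc d a b a.
Proof.
  split; [exact Ha |]. exists 1, 0; repeat split; try lra.
  apply functional_extensionality; intro i; ring.
Qed.

Lemma arc_right : arc d a b b.
Proof.
  split; [exact Hb |]. exists 0, 1; repeat split; try lra.
  apply functional_extensionality; intro i; ring.
Qed.

(* The midpoint of the arc ab is (a + b) / |a + b|, |a + b|^2 = 2 + 2<a,b>. *)
Definition midpoint_scale : R := / sqrt (2 + 2 * dot (S d) a b).

Definition arc_midpoint : vec := lincomb midpoint_scale midpoint_scale a b.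

Hypothesis Hab_gt : -1 < dot (S d) a b.

Lemma midpoint_scale_sq :
  midpoint_scale * midpoint_scale * (2 + 2 * dot (S d) a b) = 1.
Proof.
  unfold midpoint_scale.
  assert (Hpos : 0 < sqrt (2 + 2 * dot (S d) a b)) by (apply sqrt_lt_R0; lra).
  rewrite <- (sqrt_sqrt (2 + 2 * dot (S d) a b)) at 3 by lra.
  field; lra.
Qed.

Lemma midpoint_scale_pos : 0 < midpoint_scale.
Proof. apply Rinv_0_lt_compat, sqrt_lt_R0; lra. Qed.

Lemma arc_midpoint_in_arc : arc d a b arc_midpoint.
Proof.
  pose proof midpoint_scale_pos.
  split; [split |].
  - unfold arc_midpoint; rewrite lincomb_norm.
    pose proof midpoint_scale_sq; nra.
  - apply lincomb_support.
  - exists midpoint_scale, midpoint_scale; repeat split; lra.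
Qed.

Lemma midpoint_scale_gt_half : dot (S d) a b < 1 -> 1 / 2 < midpoint_scale.
Proof.
  intro Hlt. pose proof midpoint_scale_pos. pose proof midpoint_scale_sq.
  assert (Hsq : 1 / 4 < midpoint_scale * midpoint_scale) by nra.
  nra.
Qed.

Lemma arc_midpoint_closer q c :
  dot (S d) a b < 1 -> 0 < c -> c <= dot (S d) a q -> c <= dot (S d) b q ->
  c < dot (S d) arc_midpoint q.
Proof.
  intros Hlt Hc Haq Hbq.
  pose proof (midpoint_scale_gt_half Hlt).
  unfold arc_midpoint; rewrite dot_lincomb_l. nra.
Qed.

End UnitVectors.

Lemma acos_eq_cos x delta : 0 < delta < PI -> acos x = delta -> x = cos delta.
Proof.
  intros Hdelta Hx.
  assert (Hrange : -1 < x < 1).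
  { unfold acos in Hx.
    destruct (Rle_dec x (-1)); [lra |]. destruct (Rle_dec 1 x); lra. }
  rewrite <- Hx, cos_acos; lra.
Qed.

Lemma acos_le_cos x delta : 0 <= delta < PI -> acos x <= delta -> cos delta <= x.
Proof.
  intros Hdelta Hx.
  destruct (Rle_dec 1 x) as [Hge | Hlt].
  - pose proof (COS_bound delta); lra.
  - assert (Hm1 : -1 < x).
    { unfold acos in Hx. destruct (Rle_dec x (-1)); lra. }
    pose proof (acos_bound x).
    assert (Hcos : cos (acos x) = x) by (apply cos_acos; lra).
    destruct (Rle_lt_or_eq_dec _ _ Hx) as [Hl | <-]; [| lra].
    rewrite <- Hcos. left; apply cos_decreasing_1; lra.
Qed.

Lemma sboundary_closed d C p : sclosed d C -> sboundary d C p -> C p.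
Proof. intros Hcl [Hclos _]. exact (Hcl p Hclos). Qed.

Theorem proposition1 (d : nat) (delta : R) (D : vec -> Prop) :
  (2 <= d)%nat -> 0 < delta -> delta < PI / 2 ->
  constant_diameter d D delta ->
  ~ (exists a b : vec,
        on_sphere d a /\ on_sphere d b /\ a <> b /\ ~ antipodal a b /\
        (forall p, arc d a b p -> sboundary d D p)).
Proof.
  intros _ Hpos Hlt [[_ [Hcl _]] [[_ Hdiam] Hconst]]
         [a [b [Ha [Hb [Hab [Hna Hbd]]]]]].
  pose proof PI_RGT_0 as Hpi.
  pose proof (dot_lt_1 d a b Ha Hb Hab) as Hlt1.
  pose proof (dot_gt_m1 d a b Ha Hb Hna) as Hgt.
  destruct (Hconst _ (Hbd _ (arc_midpoint_in_arc d a b Ha Hb Hgt)))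
    as [m' [Hm' Hmm']].
  assert (Dm' : D m') by exact (sboundary_closed d D m' Hcl Hm').
  assert (Hinside : forall p, arc d a b p -> D p)
    by (intros p Hp; exact (sboundary_closed d D p Hcl (Hbd p Hp))).
  pose proof (acos_eq_cos _ delta ltac:(lra) Hmm') as Em.
  pose proof (acos_le_cos _ delta ltac:(lra)
                (Hdiam a m' (Hinside a (arc_left d a b Ha)) Dm')) as Ea.
  pose proof (acos_le_cos _ delta ltac:(lra)
                (Hdiam b m' (Hinside b (arc_right d a b Hb)) Dm')) as Eb.
  assert (Hcos : 0 < cos delta) by (apply cos_gt_0; lra).
  pose proof (arc_midpoint_closer d a b Hgt m' (cos delta) Hlt1 Hcos Ea Eb)
    as Hcloser.
  (* cos delta < <m, m'> = cos delta *)
  lra.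
Qed.
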